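(* Let $H$ be a Kekul\'ean hexagonal system and let $C,C'$ be Clar covers of $H$. Then $f(C)\subseteq f(C')$ if and only if every hexagon component of $C$ is a hexagon component of $C'$, and $C$ and $C'$ coincide on all edges of $H$ other than those lying on hexagon components of $C'$ (i.e. such an edge lies in $C$ iff it lies in $C'$).
   Context: A hexagonal system is a 2-connected finite plane graph in which every interior face is a regular hexagon of side length one; its hexagons are the boundaries of its interior faces; it is Kekul\'ean if it has a perfect matching. A Clar cover of $H$ is a spanning subgraph each of whose components is a hexagon of $H$ or a single edge. The resonance graph $R(H)$ has the perfect matchings of $H$ as vertices, two adjacent iff their symmetric difference is the edge set of a hexagon of $H$. For a Clar cover $C$, $f(C)$ denotes the subgraph of $R(H)$ induced by all perfect matchings $M$ of $H$ such that every hexagon component of $C$ is $M$-alternating and every single-edge component of $C$ belongs to $M$. *)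

(* Hexagonal systems are realised concretely inside the
   honeycomb lattice, coordinatised by the triangular lattice Z^2 (skew basis
   e1, e2 at 60 degrees, unit length).  Points p with p.1 - p.2 = 0 (mod 3) are
   hexagon centres; all other points are honeycomb vertices. *)
From HB Require Import structures.
From mathcomp Require Import all_boot all_order all_algebra finmap.
Set Implicit Arguments. Unset Strict Implicit. Unset Printing Implicit Defensive.
Import Order.TTheory GRing.Theory Num.Theory.
Local Open Scope ring_scope.
Local Open Scope fset_scope.

Definition pt := (int * int)%type.
(* an edge of the honeycomb, oriented canonically: first endpoint in class 1,
   second endpoint in class 2 (the honeycomb is bipartite) *)
Definition edge := (pt * pt)%type.

Definition center (p : pt) : bool := ((fst p - snd p) %% 3)%Z == 0.

Definition dirs : seq pt :=
  [:: (1, 0); (0, 1); (-1, 1); (-1, 0); (0, -1); (1, -1)].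

Definition hex_vertices (c : pt) : seq pt :=
  [seq ((fst c + fst d)%R, (snd c + snd d)%R) | d <- dirs].

Definition hex_edges (c : pt) : seq edge :=
  let v i := nth (0, 0) (hex_vertices c) i in
  [:: (v 0%N, v 1%N); (v 2%N, v 1%N); (v 2%N, v 3%N);
      (v 4%N, v 3%N); (v 4%N, v 5%N); (v 0%N, v 5%N)].

Definition cadj (c d : pt) : bool :=
  [&& center d, c != d & has (fun e => e \in hex_edges d) (hex_edges c)].

(* A hexagonal system is represented by its (finite) set S of hexagons (interior
   faces).  The graph is the union of these hexagons.  It is a hexagonal system
   (2-connected, every interior face a unit hexagon of the system) iff S is
   nonempty, edge-connected and has no holes: every lattice cell outside S can
   be joined, through cells outside S, to a cell lying strictly to the right of
   all of S (i.e. lies in the unbounded face). *)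
Definition hexsys (S : {fset pt}) : Prop :=
  [/\ S != fset0,
      (forall c, c \in S -> center c),
      (forall c d, c \in S -> d \in S ->
         exists p : seq pt, [/\ path cadj c p, last c p = d & all (fun x => x \in S) p]) &
      (forall c, center c -> c \notin S ->
         exists p : seq pt, [/\ path cadj c p, all (fun x => x \notin S) p &
                               forall d, d \in S -> fst d < fst (last c p)])].

Definition is_vert (S : {fset pt}) (v : pt) : Prop :=
  exists2 c, c \in S & v \in hex_vertices c.

Definition is_edge (S : {fset pt}) (e : edge) : Prop :=
  exists2 c, c \in S & e \in hex_edges c.

Definition incident (v : pt) (e : edge) : bool := (fst e == v) || (snd e == v).

Definition perfect_matching (S : {fset pt}) (M : {fset edge}) : Prop :=
  (forall e, e \in M -> is_edge S e) /\
  (forall v, is_vert S v ->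
     exists e, [/\ e \in M, incident v e &
                   forall e', e' \in M -> incident v e' -> e' = e]).

Definition kekulean (S : {fset pt}) : Prop := exists M, perfect_matching S M.

(* A Clar cover C is encoded by its hexagon components Hs (hexagons of H,
   given by their centres) and its single-edge components Es: these are
   pairwise vertex-disjoint and together cover every vertex of H. *)
Definition clar_cover (S : {fset pt}) (Hs : {fset pt}) (Es : {fset edge}) : Prop :=
  [/\ (forall h, h \in Hs -> h \in S),
      (forall e, e \in Es -> is_edge S e) &
      (forall v, is_vert S v ->
         (exists2 h, h \in Hs & v \in hex_vertices h) \/
         (exists2 e, e \in Es & incident v e))] /\
  [/\ (forall v h h', h \in Hs -> h' \in Hs ->
         v \in hex_vertices h -> v \in hex_vertices h' -> h = h'),
      (forall v e e', e \in Es -> e' \in Es -> incident v e -> incident v e' -> e = e') &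
      (forall v h e, h \in Hs -> e \in Es -> v \in hex_vertices h -> ~~ incident v e)].

Definition on_hexes (Hs : {fset pt}) (e : edge) : Prop :=
  exists2 h, h \in Hs & e \in hex_edges h.

Definition in_cover (Hs : {fset pt}) (Es : {fset edge}) (e : edge) : Prop :=
  e \in Es \/ on_hexes Hs e.

Definition alternating (M : {fset edge}) (h : pt) : Prop :=
  forall i : nat, (i < 6)%N ->
    (nth (0, 0, (0, 0)) (hex_edges h) i \in M) !=
    (nth (0, 0, (0, 0)) (hex_edges h) ((i.+1) %% 6) \in M).

Definition in_f (S : {fset pt}) (Hs : {fset pt}) (Es : {fset edge}) (M : {fset edge}) : Prop :=
  [/\ perfect_matching S M,
      (forall h, h \in Hs -> alternating M h) &
      (forall e, e \in Es -> e \in M)].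

(* Choosing one of the two perfect matchings on every hexagon component of a
   Clar cover C and adding its single edges gives matchings in f(C).  In any M
   of f(C) the M-edge at a vertex v is pinned down by the component of C
   covering v: it is that single edge, or an edge of that hexagon.  Hence, if
   f(C) is contained in f(C'), two such matchings using different edges of a
   hexagon h of C at a common vertex force h to be a hexagon of C', and an edge
   off the hexagons of C' is a single edge of C' exactly when it lies in C.
   Conversely, under these two conditions every M in f(C) contains the single
   edges of C', and a hexagon of C' that is new is covered by single edges of C
   lying on it, so it is M-alternating. *)

From HB Require Import structures.
From mathcomp Require Import all_boot all_order all_algebra finmap zify.
Local Open Scope fset_scope.
Set Implicit Arguments. Unset Strict Implicit.

Definition hex_edge (h : pt) (i : nat) : edge := nth (0%R, 0%R, (0%R, 0%R)) (hex_edges h) i.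
Definition hex_vertex (h : pt) (i : nat) : pt := nth (0%R, 0%R) (hex_vertices h) i.

Definition hex_matching (b : bool) (h : pt) : seq edge :=
  if b then [:: hex_edge h 0; hex_edge h 2; hex_edge h 4]
  else [:: hex_edge h 1; hex_edge h 3; hex_edge h 5].

Ltac case_mem := let H := fresh "H" in move=> H;
  repeat (rewrite inE in H; case/predU1P: H => [-> | H]);
  try (by rewrite in_nil in H); try (rewrite inE in H; move/eqP: H => ->).

Ltac split_bool_hyps := repeat match goal with
  | H : is_true (_ || _) |- _ => case/orP: H => H
  | H : is_true (_ && _) |- _ => case/andP: H => ? ?
  end.

Section HexagonGeometry.

Variable h : pt.

Lemma hex_edge_mem i : (i < 6)%N -> hex_edge h i \in hex_edges h.
Proof. by move=> lt_i6; rewrite /hex_edge mem_nth //; case: h. Qed.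

Lemma hex_edge_ends e : e \in hex_edges h -> e.1 \in hex_vertices h /\ e.2 \in hex_vertices h.
Proof.
case: h => x y; rewrite /hex_edges /=.
by case_mem; split; rewrite /= !inE !eqxx ?orbT.
Qed.

Lemma hex_vertex_of_incident v e : e \in hex_edges h -> incident v e -> v \in hex_vertices h.
Proof. by move=> /hex_edge_ends [e1h e2h] /orP [] /eqP <-. Qed.

Lemma hex_vertexP v : v \in hex_vertices h -> exists2 i, (i < 6)%N & v = hex_vertex h (i.+1 %% 6).
Proof.
case: h => x y; rewrite /hex_vertices /=; case_mem.
by exists 5%N. by exists 0%N. by exists 1%N. by exists 2%N. by exists 3%N. by exists 4%N.
Qed.

Lemma hex_vertex_incident_edges i : (i < 6)%N ->
  incident (hex_vertex h (i.+1 %% 6)) (hex_edge h i) &&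
  incident (hex_vertex h (i.+1 %% 6)) (hex_edge h (i.+1 %% 6)).
Proof.
by case: h => x y; do 6?case: i => [|i] //; rewrite /incident /hex_vertex /hex_edge /= !eqxx ?orbT.
Qed.

Lemma hex_edge_succ_neq i : (i < 6)%N -> hex_edge h i != hex_edge h (i.+1 %% 6).
Proof.
case: h => x y; do 6?case: i => [|i] //; move=> _;
  by rewrite /hex_edge /= !xpair_eqE; apply/negP => eq_e; split_bool_hyps; lia.
Qed.

Lemma hex_edges_at_vertex i e : (i < 6)%N -> e \in hex_edges h ->
  incident (hex_vertex h (i.+1 %% 6)) e -> e = hex_edge h i \/ e = hex_edge h (i.+1 %% 6).
Proof.
case: h => x y; do 6?case: i => [|i] //; move=> _; rewrite /hex_edges /=; case_mem;
  rewrite /incident /hex_vertex /hex_edge /= !xpair_eqE => inc; split_bool_hyps;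
  first [by left | by right | exfalso; lia].
Qed.

Lemma eq_hex_of_consecutive_edges i h' : (i < 6)%N ->
  hex_edge h i \in hex_edges h' -> hex_edge h (i.+1 %% 6) \in hex_edges h' -> h = h'.
Proof.
case: h => x y; case: h' => x' y'; do 6?case: i => [|i] //; move=> _;
  rewrite /hex_edge /hex_edges /= !inE /= !xpair_eqE => e1 e2; split_bool_hyps;
  congr pair; lia.
Qed.

Lemma hex_matching_sub b e : e \in hex_matching b h -> e \in hex_edges h.
Proof.
by case: b; rewrite /hex_matching; case_mem; apply: hex_edge_mem.
Qed.

Lemma hex_matching_cover b v : v \in hex_vertices h ->
  exists2 e, e \in hex_matching b h & incident v e.
Proof.
move=> /hex_vertexP [i lt_i6 ->].
have /andP [inc_i inc_si] := hex_vertex_incident_edges lt_i6.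
(* of the two edges at a vertex, one is even and the other odd *)
move: lt_i6 inc_i inc_si; case: b; do 6?case: i => [|i] //; move=> _ inc_i inc_si;
  first [ by eexists; last exact: inc_i; rewrite !inE eqxx ?orbT
        | by eexists; last exact: inc_si; rewrite !inE eqxx ?orbT ].
Qed.

Lemma hex_matching_uniq b v e e' : e \in hex_matching b h -> e' \in hex_matching b h ->
  incident v e -> incident v e' -> e = e'.
Proof.
case: h v => x y [v1 v2] eh e'h inc inc'; move: eh inc; case: b e'h;
  rewrite /hex_matching /hex_edge /= => e'h; case_mem; move: e'h inc'; case_mem;
  rewrite /incident /= !xpair_eqE => inc inc'; split_bool_hyps; first [done | exfalso; lia].
Qed.

End HexagonGeometry.

Lemma alternatingE (M : {fset edge}) h :
  alternating M h <->
  forall i, (i < 6)%N -> (hex_edge h i \in M) != (hex_edge h (i.+1 %% 6) \in M).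
Proof. by []. Qed.

Section Alternation.

Variables (M : {fset edge}) (h : pt).

Definition matched_on_hex (v : pt) := exists2 e, e \in M & (e \in hex_edges h) && incident v e.

Lemma alternating_of_matched :
  (forall v e e', v \in hex_vertices h -> e \in M -> e' \in M ->
     incident v e -> incident v e' -> e = e') ->
  (forall v, v \in hex_vertices h -> matched_on_hex v) ->
  alternating M h.
Proof.
move=> M_uniq M_cover; apply/alternatingE => i lt_i6.
have /andP [inc_i inc_si] := hex_vertex_incident_edges h lt_i6.
have vh := hex_vertex_of_incident (hex_edge_mem h lt_i6) inc_i.
case Mi: (hex_edge h i \in M); case Msi: (hex_edge h (i.+1 %% 6) \in M) => //=.
  by move: (hex_edge_succ_neq h lt_i6); rewrite (M_uniq _ _ _ vh Mi Msi inc_i inc_si) eqxx.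
have [e eM /andP [eh inc_e]] := M_cover _ vh.
by case: (hex_edges_at_vertex lt_i6 eh inc_e) => -> in eM; rewrite eM in Mi Msi.
Qed.

Lemma alternating_matched v : alternating M h -> v \in hex_vertices h -> matched_on_hex v.
Proof.
move=> /alternatingE alt /hex_vertexP [i lt_i6 ->].
have /andP [inc_i inc_si] := hex_vertex_incident_edges h lt_i6.
have lt_si6 : (i.+1 %% 6 < 6)%N by rewrite ltn_mod.
case Mi: (hex_edge h i \in M).
  by exists (hex_edge h i); rewrite // hex_edge_mem.
exists (hex_edge h (i.+1 %% 6)); last by rewrite hex_edge_mem.
by move: (alt i lt_i6); rewrite Mi; case: (_ \in M).
Qed.

End Alternation.

Lemma on_hexesP (Hs : {fset pt}) e :
  reflect (on_hexes Hs e) (has (fun h => e \in hex_edges h) Hs).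
Proof.
apply: (iffP hasP) => [[h hH eh] | [h hH eh]]; by exists h.
Qed.

Lemma perfect_matching_uniq S M v e e' : perfect_matching S M -> is_vert S v ->
  e \in M -> e' \in M -> incident v e -> incident v e' -> e = e'.
Proof.
move=> [_ M_cover] vS eM e'M inc inc'.
by have [e0 [_ _ M_uniq]] := M_cover v vS; rewrite (M_uniq _ eM inc) (M_uniq _ e'M inc').
Qed.

Section ClarCover.

Variables (S Hs : {fset pt}) (Es : {fset edge}).
Hypothesis cover : clar_cover S Hs Es.

Lemma single_edge_off_hexes e : e \in Es -> ~ on_hexes Hs e.
Proof.
have [_ [_ _ disj]] := cover; move=> eE [h hH eh].
by move: (disj _ _ _ hH eE (proj1 (hex_edge_ends eh))); rewrite /incident eqxx.
Qed.

Definition clar_matching (g : pt -> bool) : {fset edge} :=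
  Es `|` seq_fset tt (flatten [seq hex_matching (g h) h | h <- Hs]).

Variable g : pt -> bool.

Lemma clar_matchingP e : e \in clar_matching g ->
  e \in Es \/ exists2 h, h \in Hs & e \in hex_matching (g h) h.
Proof.
rewrite in_fsetU seq_fsetE => /orP [|/flatten_mapP [h hH eh]]; first by left.
by right; exists h.
Qed.

Lemma clar_matching_single e : e \in Es -> e \in clar_matching g.
Proof. by rewrite in_fsetU => ->. Qed.

Lemma clar_matching_hex h e : h \in Hs -> e \in hex_matching (g h) h -> e \in clar_matching g.
Proof.
by move=> hH eh; rewrite in_fsetU seq_fsetE; apply/orP; right; apply/flatten_mapP; exists h.
Qed.

Lemma clar_matching_uniq v e e' : e \in clar_matching g -> e' \in clar_matching g ->
  incident v e -> incident v e' -> e = e'.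
Proof.
have [_ [hex_disj single_disj hex_single_disj]] := cover.
move=> /clar_matchingP [eE | [h hH eh]] /clar_matchingP [e'E | [h' h'H e'h']] inc inc'.
- exact: single_disj inc inc'.
- have := hex_single_disj v h' e h'H eE (hex_vertex_of_incident (hex_matching_sub e'h') inc').
  by rewrite inc.
- have := hex_single_disj v h e' hH e'E (hex_vertex_of_incident (hex_matching_sub eh) inc).
  by rewrite inc'.
- have vh := hex_vertex_of_incident (hex_matching_sub eh) inc.
  have vh' := hex_vertex_of_incident (hex_matching_sub e'h') inc'.
  move: e'h'; rewrite -(hex_disj v h h' hH h'H vh vh') => e'h.
  exact: hex_matching_uniq eh e'h inc inc'.
Qed.

Lemma clar_matching_in_f : in_f S Hs Es (clar_matching g).
Proof.
have [[HsS EsS vertex_cover] _] := cover.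
have matched_by e v : e \in clar_matching g -> incident v e ->
    exists e0, [/\ e0 \in clar_matching g, incident v e0 &
      forall e', e' \in clar_matching g -> incident v e' -> e' = e0].
  by move=> eM inc; exists e; split=> // e' e'M inc'; apply: clar_matching_uniq inc' inc.
split; [split | |].
- move=> e /clar_matchingP [eE | [h hH eh]]; first exact: EsS.
  by exists h; [apply: HsS | apply: hex_matching_sub eh].
- move=> v /vertex_cover [[h hH vh] | [e eE inc]].
    have [e eh inc] := hex_matching_cover (g h) vh.
    exact: matched_by (clar_matching_hex hH eh) inc.
  exact: matched_by (clar_matching_single eE) inc.
- move=> h hH; apply: alternating_of_matched => [v e e' _|v vh].
    exact: clar_matching_uniq.
  have [e eh inc] := hex_matching_cover (g h) vh.
  by exists e; [apply: clar_matching_hex hH eh | rewrite (hex_matching_sub eh) inc].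
- exact: clar_matching_single.
Qed.

End ClarCover.

Lemma in_f_edge_at S Hs Es M v e : clar_cover S Hs Es -> in_f S Hs Es M -> is_vert S v ->
  e \in M -> incident v e ->
  e \in Es \/ exists2 h, h \in Hs & (v \in hex_vertices h) && (e \in hex_edges h).
Proof.
move=> [[_ _ vertex_cover] _] [M_pm M_alt EsM] vS eM inc.
case: (vertex_cover v vS) => [[h hH vh] | [e' e'E inc']].
  have [f fM /andP [fh incf]] := alternating_matched (M_alt h hH) vh.
  by right; exists h; rewrite // vh -(perfect_matching_uniq M_pm vS fM eM incf inc).
by left; rewrite -(perfect_matching_uniq M_pm vS (EsM _ e'E) eM inc' inc).
Qed.

Lemma is_vert_fst S e : is_edge S e -> is_vert S e.1.
Proof. by case=> h hS eh; exists h; rewrite // (proj1 (hex_edge_ends eh)). Qed.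

Section Inclusion.

Variables (S Hs Hs' : {fset pt}) (Es Es' : {fset edge}).
Hypotheses (cover : clar_cover S Hs Es) (cover' : clar_cover S Hs' Es').

Section Necessity.

Hypothesis f_sub : forall M, in_f S Hs Es M -> in_f S Hs' Es' M.

(* At the vertex shared by the edges 0 and 1 of a hexagon [h] of C, two
   matchings of f(C) use these two different edges; in C' that vertex must then
   lie on a hexagon containing both edges, which is [h]. *)
Lemma hexes_sub_of_f_sub h : h \in Hs -> h \in Hs'.
Proof.
move=> hH; have hS : h \in S by case: cover => [[HsS _ _] _]; apply: HsS.
have lt06 : (0 < 6)%N by [].
have /andP [inc0 inc1] := hex_vertex_incident_edges h lt06.
have vS : is_vert S (hex_vertex h 1).
  by exists h; rewrite // (hex_vertex_of_incident (hex_edge_mem h lt06) inc0).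
have e0M1 : hex_edge h 0 \in clar_matching Hs Es (fun=> true).
  by apply: clar_matching_hex hH _; rewrite inE eqxx.
have e1M2 : hex_edge h 1 \in clar_matching Hs Es (fun h' => h' != h).
  by apply: clar_matching_hex hH _; rewrite eqxx inE eqxx.
have [_ alt2 Es'M2] := f_sub (clar_matching_in_f cover (fun h' => h' != h)).
have [e0E' | [h' h'H /andP [vh' e0h']]] :=
  in_f_edge_at cover' (f_sub (clar_matching_in_f cover (fun=> true))) vS e0M1 inc0.
  have := hex_edge_succ_neq h lt06.
  by rewrite (clar_matching_uniq cover (Es'M2 _ e0E') e1M2 inc0 inc1) eqxx.
have [f fM2 /andP [fh' incf]] := alternating_matched (alt2 h' h'H) vh'.
rewrite (clar_matching_uniq cover fM2 e1M2 incf inc1) in fh'.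
by rewrite (eq_hex_of_consecutive_edges lt06 e0h' fh').
Qed.

Lemma cover_agree_of_f_sub e : is_edge S e -> ~ on_hexes Hs' e ->
  in_cover Hs Es e <-> in_cover Hs' Es' e.
Proof.
move=> eS off_Hs'.
have M_f' := f_sub (clar_matching_in_f cover (fun=> true)).
split.
- case=> [eE | [h hH eh]]; last by case: off_Hs'; exists h; rewrite ?hexes_sub_of_f_sub.
  have inc1 : incident e.1 e by rewrite /incident eqxx.
  have [e'E | [h' h'H /andP [_ eh']]] :=
    in_f_edge_at cover' M_f' (is_vert_fst eS) (clar_matching_single Hs (fun=> true) eE) inc1.
    by left.
  by case: off_Hs'; exists h'.
- case=> [e'E | //]; have [_ _ Es'M] := M_f'.
  case/clar_matchingP: (Es'M _ e'E) => [eE | [h hH eh]]; first by left.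
  by right; exists h; rewrite // (hex_matching_sub eh).
Qed.

End Necessity.

Section Sufficiency.

Hypothesis hexes_sub : forall h, h \in Hs -> h \in Hs'.
Hypothesis cover_agree : forall e, is_edge S e -> ~ on_hexes Hs' e ->
  (in_cover Hs Es e <-> in_cover Hs' Es' e).

Variable M : {fset edge}.
Hypothesis M_f : in_f S Hs Es M.

Lemma single_edges_sub e : e \in Es' -> e \in Es.
Proof.
have [[_ Es'S _] _] := cover'; move=> e'E.
have off_Hs' := single_edge_off_hexes cover' e'E.
case: (proj2 (cover_agree (Es'S _ e'E) off_Hs') (or_introl e'E)) => // [[h hH eh]].
by case: off_Hs'; exists h; rewrite ?hexes_sub.
Qed.

(* A hexagon [h'] of C' that is not a hexagon of C has all its vertices
   covered by single edges of C, and these must be edges of [h']. *)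
Lemma alternating_of_cover_agree h' : h' \in Hs' -> alternating M h'.
Proof.
have [[_ EsS vertex_cover] _] := cover.
have [[Hs'S _ _] [hex_disj' _ hex_single_disj']] := cover'.
have [M_pm M_alt _] := M_f.
move=> h'H; case h'_old: (h' \in Hs); first exact: M_alt.
have vS v : v \in hex_vertices h' -> is_vert S v by exists h'; rewrite ?Hs'S.
apply: alternating_of_matched => [v e e' /vS|v vh']; first exact: perfect_matching_uniq.
case: (vertex_cover v (vS v vh')) => [[h hH vh] | [e eE inc]].
  by move: h'_old; rewrite -(hex_disj' v h h' (hexes_sub hH) h'H vh vh') hH.
exists e; first by case: M_f => _ _; apply.
case: (on_hexesP Hs' e) => [[h'' h''H eh''] | off_Hs'].
  by rewrite -(hex_disj' v h'' h' h''H h'H (hex_vertex_of_incident eh'' inc) vh') eh'' inc.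
case: (proj1 (cover_agree (EsS _ eE) off_Hs') (or_introl eE)) => // e'E.
by move: (hex_single_disj' v h' e h'H e'E vh'); rewrite inc.
Qed.

Lemma in_f_of_cover_agree : in_f S Hs' Es' M.
Proof.
have [M_pm _ EsM] := M_f.
split=> // [h' /alternating_of_cover_agree | e /single_edges_sub] //; exact: EsM.
Qed.

End Sufficiency.
End Inclusion.

Unset Implicit Arguments.

Theorem theorem3 (S : {fset pt}) (Hs : {fset pt}) (Es : {fset edge})
    (Hs' : {fset pt}) (Es' : {fset edge}) :
  hexsys S -> kekulean S ->
  clar_cover S Hs Es -> clar_cover S Hs' Es' ->
  ((forall M : {fset edge}, in_f S Hs Es M -> in_f S Hs' Es' M) <->
   ((forall h, h \in Hs -> h \in Hs') /\
    (forall e, is_edge S e -> ~ on_hexes Hs' e ->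
       (in_cover Hs Es e <-> in_cover Hs' Es' e)))).
Proof.
move=> _ _ cover cover'; split.
- move=> f_sub; split.
    exact: hexes_sub_of_f_sub cover cover' f_sub.
  exact: cover_agree_of_f_sub cover cover' f_sub.
- by move=> [hexes_sub cover_agree] M; apply: in_f_of_cover_agree.
Qed.
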